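(* Let $H_1$ and $H_2$ be groups, where $H_2$ does not have exponential growth. Let $G\leqslant H_1\times H_2$ be finitely generated, such that the restriction to $G$ of the projection $H_1\times H_2\to H_1$ is infinite-to-1. Then for any constants $\alpha,\beta>0$ there exists a finite generating set $U$ of $G$ such that $|U^n|<(\alpha|U|)^{\beta n}$ for some $n\in\mathbb{N}$.
   Context: For a finitely generated group $G$ with finite generating set $S$, let $B_S(n)$ be the ball of radius $n$ about the identity in the word metric of $S$, and $\omega(G,S)=\lim_{n\to\infty}|B_S(n)|^{1/n}$; $G$ has exponential growth if $\omega(G,S)>1$ (for some, equivalently every, finite generating set $S$). A group not assumed finitely generated is said not to have exponential growth if none of its finitely generated subgroups has exponential growth. $U^n=\{u_1\cdots u_n:u_i\in U\}$. A homomorphism is infinite-to-1 if its kernel is infinite. *)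

From HB Require Import structures.
From mathcomp Require Import ssreflect ssrfun ssrbool eqtype ssrnat seq choice.
From mathcomp Require Import monoid.
From mathcomp Require Import finmap.
From Stdlib Require Import Reals.

Set Implicit Arguments.
Unset Strict Implicit.
Unset Printing Implicit Defensive.

Local Open Scope fset_scope.
Local Open Scope group_scope.

Definition prodG (H1 H2 : groupType) : Type := (H1 * H2)%type.
HB.instance Definition _ (H1 H2 : groupType) := Choice.on (prodG H1 H2).

Section Prod.
Variables H1 H2 : groupType.
Definition pmul (x y : prodG H1 H2) : prodG H1 H2 := (x.1 * y.1, x.2 * y.2).
Definition pone : prodG H1 H2 := (1, 1).
Definition pinv (x : prodG H1 H2) : prodG H1 H2 := (x.1^-1, x.2^-1).
Fact pmulA : associative pmul.
Proof. by move=> [a b] [c d] [e f]; rewrite /pmul /= !mulgA. Qed.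
Fact pmul1 : left_id pone pmul.
Proof. by move=> [a b]; rewrite /pmul /= !mul1g. Qed.
Fact pmulr1 : right_id pone pmul.
Proof. by move=> [a b]; rewrite /pmul /= !mulg1. Qed.
Fact pmulV : left_inverse pone pinv pmul.
Proof. by move=> [a b]; rewrite /pmul /= !mulVg. Qed.
Fact pmulrV : right_inverse pone pinv pmul.
Proof. by move=> [a b]; rewrite /pmul /= !mulgV. Qed.
HB.instance Definition _ := isGroup.Build (prodG H1 H2) pmulA pmul1 pmulr1 pmulV pmulrV.
End Prod.

Definition proj1G (H1 H2 : groupType) (x : prodG H1 H2) : H1 := x.1.

Section Growth.
Variable G : groupType.

Inductive gen (S : {fset G}) : G -> Prop :=
| gen_in x : x \in S -> gen S x
| gen_one : gen S 1
| gen_inv x : gen S x -> gen S x^-1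
| gen_mul x y : gen S x -> gen S y -> gen S (x * y).

Definition is_subgroup (K : G -> Prop) : Prop :=
  K 1 /\ (forall x y, K x -> K y -> K (x * y)) /\ (forall x, K x -> K x^-1).

Definition generates (S : {fset G}) (K : G -> Prop) : Prop :=
  forall x, gen S x <-> K x.

Definition fin_generated (K : G -> Prop) : Prop :=
  exists S : {fset G}, generates S K.

Fixpoint fpow (U : {fset G}) (n : nat) : {fset G} :=
  match n with
  | 0 => [fset (1 : G)]
  | n'.+1 => [fset x * y | x in fpow U n', y in U]
  end.

(* ball of radius n about 1 in the word metric of S:
   products of at most n elements of S u S^-1 *)
Fixpoint ball (S : {fset G}) (n : nat) : {fset G} :=
  match n with
  | 0 => [fset (1 : G)]
  | n'.+1 => ball S n' `|` [fset x * y | x in ball S n', y in S `|` [fset z^-1 | z in S]]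
  end.

Definition growth_rate_gt1 (S : {fset G}) : Prop :=
  exists l : R, Un_cv (fun n => Rpower (INR #|` ball S n|) (/ INR n)) l /\ (1 < l)%R.

Definition has_exp_growth (K : G -> Prop) : Prop :=
  exists S : {fset G}, generates S K /\ growth_rate_gt1 S.

(* a (not necessarily f.g.) group does not have exponential growth:
   none of its finitely generated subgroups has exponential growth *)
Definition no_exp_growth : Prop :=
  forall K : G -> Prop, is_subgroup K -> fin_generated K -> ~ has_exp_growth K.
End Growth.

(* the restriction of a homomorphism f to the subgroup K is infinite-to-1:
   its kernel {g in K | f g = 1} is infinite *)
Definition infinite_to_one (G H : groupType) (f : G -> H) (K : G -> Prop) : Prop :=
  ~ exists s : {fset G}, forall g, K g -> f g = 1 -> g \in s.

(* Enlarge a generating set S of G by more than (2(|S|+1))^(1/beta)/alpha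
   elements of the kernel of the first projection, which is infinite; call the
   result U.  The first coordinates of U take at most |S|+1 values, so
   |U^n| <= (|S|+1)^n |B_T(n)|, where T is the set of second coordinates of U.
   As <T> <= H2 does not have exponential growth, |B_T(n)| < 2^n for some n:
   otherwise Fekete's lemma, applied to the subadditive sequence log |B_T(n)|,
   would give a growth rate of at least 2.  For this n,
   |U^n| < (2(|S|+1))^n <= (alpha |U|)^(beta n). *)

(* Stdlib comes first so that [^] on nat denotes ssrnat's [expn], not [Nat.pow]. *)
From Stdlib Require Import Reals Lra Lia Classical.
From mathcomp Require Import ssreflect ssrfun ssrbool eqtype ssrnat div seq choice.
From mathcomp Require Import monoid finmap.

Set Implicit Arguments.
Unset Strict Implicit.
Unset Printing Implicit Defensive.

Local Open Scope fset_scope.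

Lemma card_imfset2_le (T1 T2 K : choiceType) (f : T1 -> T2 -> K)
    (A : {fset T1}) (B : {fset T2}) :
  #|` [fset f x y | x in A, y in B]| <= #|` A| * #|` B|.
Proof.
rewrite unlock /= size_seq_fset (leq_trans (size_undup _)) //.
by rewrite size_allpairs.
Qed.

Section WordBalls.
Local Open Scope group_scope.
Variable G : groupType.
Implicit Types (S U : {fset G}) (K : G -> Prop).

Lemma gen_is_subgroup S : is_subgroup (gen S).
Proof. by split; [exact: gen_one | split; [exact: gen_mul | exact: gen_inv]]. Qed.

Lemma gen_min S K : is_subgroup K -> (forall s, s \in S -> K s) ->
  forall x, gen S x -> K x.
Proof. by move=> [K1 [KM KV]] SK x; elim=> *; auto. Qed.

Lemma gen_subset S U : S `<=` U -> forall x, gen S x -> gen U x.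
Proof.
move=> SU; apply: gen_min; first exact: gen_is_subgroup.
by move=> s /(fsubsetP SU); apply: gen_in.
Qed.

Lemma generates_fsetU S U K : is_subgroup K -> generates S K ->
  (forall u, u \in U -> K u) -> generates (S `|` U) K.
Proof.
move=> K_sub S_gen UK x; split; last by move/S_gen; apply: gen_subset; apply: fsubsetUl.
by apply: gen_min => // u /fsetUP [/gen_in/S_gen | /UK].
Qed.

Lemma one_in_ball S n : (1 : G) \in ball S n.
Proof. by elim: n => [|n IH] /=; rewrite ?fset11 // in_fsetU IH. Qed.

Lemma card_ball_gt0 S n : 0 < #|` ball S n|.
Proof. by rewrite cardfs_gt0; apply/fset0Pn; exists 1; apply: one_in_ball. Qed.

Lemma ballD S m n : ball S (m + n) `<=` [fset x * y | x in ball S m, y in ball S n].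
Proof.
elim: n => [|n IH].
  rewrite addn0; apply/fsubsetP => x xb; apply/imfset2P; exists x => //.
  by exists 1; rewrite ?fset11 ?mulg1.
apply/fsubsetP => z; rewrite addnS in_fsetU => /orP [/(fsubsetP IH)|].
  case/imfset2P => x xb [y yb ->]; apply/imfset2P; exists x => //.
  by exists y; rewrite //= in_fsetU yb.
case/imfset2P => w /(fsubsetP IH) /imfset2P [x xb [y yb ->]] [t tS ->].
apply/imfset2P; exists x => //; exists (y * t); last by rewrite mulgA.
by rewrite /= in_fsetU; apply/orP; right; apply/imfset2P; exists y => //; exists t.
Qed.

Lemma card_ballD S m n : #|` ball S (m + n)| <= #|` ball S m| * #|` ball S n|.
Proof. exact: leq_trans (fsubset_leq_card (ballD S m n)) (card_imfset2_le _ _ _). Qed.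

Lemma fpow_sub_ball S n : fpow S n `<=` ball S n.
Proof.
elim: n => [|n IH] //=; apply/fsubsetP => z /imfset2P [x xb [y yS ->]].
rewrite in_fsetU; apply/orP; right; apply/imfset2P; exists x; first exact: (fsubsetP IH).
by exists y; rewrite //= in_fsetU yS.
Qed.

Lemma card_fpow S n : #|` fpow S n| <= #|` S| ^ n.
Proof.
elim: n => [|n IH]; first by rewrite /= cardfs1.
by rewrite expnSr (leq_trans (card_imfset2_le _ _ _)) // leq_mul2r IH orbT.
Qed.

End WordBalls.

Lemma fpow_morph (G H : groupType) (f : G -> H) (U : {fset G}) n x :
  f 1%g = 1%g -> {morph f : x y / (x * y)%g} ->
  x \in fpow U n -> f x \in fpow [fset f u | u in U] n.
Proof.
move=> f1 fM; elim: n x => [|n IH] x /=.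
  by rewrite !in_fset1 => /eqP ->; rewrite f1.
case/imfset2P => y /IH fy [u uU ->]; rewrite fM; apply/imfset2P.
by exists (f y) => //; exists (f u) => //; apply/imfsetP; exists u.
Qed.

Section RealAnalysis.
Local Open Scope R_scope.

Lemma ln_le x y : 0 < x -> x <= y -> ln x <= ln y.
Proof. by move=> x0 [/(ln_increasing _ _ x0)/Rlt_le | ->] //; apply: Rle_refl. Qed.

Lemma INR_expn m n : INR (m ^ n) = INR m ^ n.
Proof. by elim: n => [|n IH] //; rewrite expnS mult_INR IH. Qed.

Lemma archimedean_nat eps x : 0 < eps -> exists N : nat, x < INR N * eps.
Proof.
move=> eps0; have [up_gt _] := archimed (x / eps).
exists (Z.to_nat (up (x / eps))).
have : x / eps < INR (Z.to_nat (up (x / eps))).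
  by rewrite INR_IZR_INZ; apply: Rlt_le_trans up_gt _; apply: IZR_le; lia.
move/(Rmult_lt_compat_r eps _ _ eps0).
by rewrite /Rdiv Rmult_assoc Rinv_l ?Rmult_1_r //; lra.
Qed.

Lemma pow_le_Rpower c x beta n : 0 < c -> 0 < beta ->
  Rpower c (/ beta) <= x -> c ^ n <= Rpower x (beta * INR n).
Proof.
move=> c0 beta0 cx.
have x0 : 0 < x by apply: Rlt_le_trans cx; apply: exp_pos.
have c_le : c <= Rpower x beta.
  rewrite -{1}(Rpower_1 c) // -(Rinv_l beta) -?Rpower_mult; last lra.
  by apply: Rle_Rpower_l; [lra | split=> //; apply: exp_pos].
rewrite -Rpower_mult Rpower_pow; last exact: exp_pos.
by apply: pow_incr; lra.
Qed.

Section Fekete.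
Variable a : nat -> R.
Hypothesis a_ge0 : forall n, 0 <= a n.
Hypothesis a_subadd : forall m n, a (m + n)%N <= a m + a n.

Lemma subadd_le_mul q k r : a (q * k + r)%N <= INR q * a k + a r.
Proof.
elim: q => [|q IH]; first by rewrite mul0n add0n /=; lra.
rewrite S_INR mulSn -addnA; apply: Rle_trans (a_subadd _ _) _; lra.
Qed.

Lemma subadd_le_ratio k n : (0 < k)%N ->
  a n <= a k / INR k * INR n + (INR k * a 1 + a 0).
Proof.
move=> k0; have k0R : 0 < INR k by apply: lt_0_INR; apply/ltP.
rewrite {1}(divn_eq n k); apply: Rle_trans (subadd_le_mul _ _ _) _.
have a_rem : a (n %% k)%N <= INR k * a 1 + a 0.
  have := subadd_le_mul (n %% k) 1 0; rewrite muln1 addn0.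
  have : INR (n %% k) <= INR k by apply: le_INR; apply/leP; rewrite ltnW ?ltn_pmod.
  by have := a_ge0 1; nra.
have quo_le : INR (n %/ k) * INR k <= INR n.
  by rewrite -mult_INR; apply: le_INR; apply/leP; rewrite leq_trunc_div.
have ratio_ge0 : 0 <= a k / INR k.
  by apply: Rmult_le_pos => //; left; apply: Rinv_0_lt_compat.
have -> : INR (n %/ k) * a k = a k / INR k * (INR (n %/ k) * INR k) by field; lra.
nra.
Qed.

Lemma ratio_inf_exists : exists L, (forall n, (0 < n)%N -> L <= a n / INR n) /\
  forall eps, 0 < eps -> exists n, (0 < n)%N /\ a n / INR n < L + eps.
Proof.
pose E c := forall n, (0 < n)%N -> c <= a n / INR n.
have [||L [L_ub L_lub]] := completeness E.
- by exists (a 1 / INR 1) => c; apply.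
- exists 0 => n n0; apply: Rmult_le_pos => //; left.
  by apply: Rinv_0_lt_compat; apply: lt_0_INR; apply/ltP.
exists L; split=> [n n0 | eps eps0]; first by apply: L_lub => c; apply.
apply: NNPP => no_n; have : L + eps <= L; last lra.
apply: L_ub => n n0; apply: Rnot_lt_le => lt; apply: no_n; exists n; split=> //.
Qed.

Lemma fekete : exists L, Un_cv (fun n => a n / INR n) L /\
  forall c, (forall n, (0 < n)%N -> c <= a n / INR n) -> c <= L.
Proof.
have [L [L_le L_approx]] := ratio_inf_exists.
exists L; split=> [eps eps0 | c c_le]; last first.
  apply: Rnot_lt_le => Lc; have [|n [n0]] := L_approx (c - L); first lra.
  by have := c_le n n0; lra.
have [|k [k0 ak]] := L_approx (eps / 2); first lra.
set M := INR k * a 1 + a 0.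
have [N MN] := archimedean_nat (2 * M) eps0.
exists N.+1 => n /leP Nn; rewrite /R_dist.
have n0R : 0 < INR n by apply: lt_0_INR; apply/ltP; apply: leq_trans Nn.
have NnR : INR N <= INR n by apply: le_INR; apply/leP; apply: ltnW.
have := subadd_le_ratio n k0; have := L_le n (leq_trans (ltn0Sn N) Nn).
set u := a n / INR n; have -> : a n = u * INR n by rewrite /u; field; lra.
move=> Lu; rewrite -/M => un.
have M_lt : M < eps / 2 * INR n by nra.
have ak_n := Rmult_lt_compat_r _ _ _ n0R ak.
have : u < L + eps by apply: (Rmult_lt_reg_r (INR n)) => //; lra.
by rewrite Rabs_right; lra.
Qed.
End Fekete.

End RealAnalysis.

Lemma growth_rate_gt1_of_pow_le (G : groupType) (S : {fset G}) (b : R) :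
  (1 < b)%R -> (forall n, b ^ n <= INR #|` ball S n|)%R -> growth_rate_gt1 S.
Proof.
move=> b1 b_le.
have ball_pos n : (0 < INR #|` ball S n|)%R.
  by apply: lt_0_INR; apply/ltP; apply: card_ball_gt0.
pose a n := ln (INR #|` ball S n|).
have a_ge0 n : (0 <= a n)%R.
  rewrite -ln_1; apply: ln_le; first lra.
  by apply: (le_INR 1); apply/leP; apply: card_ball_gt0.
have a_subadd m n : (a (m + n)%N <= a m + a n)%R.
  rewrite /a -ln_mult //; apply: ln_le => //.
  by rewrite -mult_INR; apply: le_INR; apply/leP; apply: card_ballD.
have [L [a_cvg L_ge]] := fekete a_ge0 a_subadd.
have lnb_le : (ln b <= L)%R.
  apply: L_ge => n n0; have n0R : (0 < INR n)%R by apply: lt_0_INR; apply/ltP.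
  apply: (Rmult_le_reg_r (INR n)) => //.
  rewrite /Rdiv Rmult_assoc Rinv_l ?Rmult_1_r; last lra.
  rewrite Rmult_comm -ln_pow; last lra.
  by apply: ln_le; [apply: pow_lt; lra | exact: b_le].
exists (exp L); split.
  have exp_cont := derivable_continuous_pt _ _ (derivable_pt_exp L).
  apply: Un_cv_ext (continuity_seq exp _ _ exp_cont a_cvg) => n.
  by rewrite /Rpower /a /Rdiv Rmult_comm.
rewrite -exp_0; apply: exp_increasing.
by have := ln_increasing 1 b Rlt_0_1 b1; rewrite ln_1; lra.
Qed.

Lemma no_exp_growth_ball_lt (H : groupType) (T : {fset H}) (b : R) :
  no_exp_growth H -> (1 < b)%R -> exists n, (INR #|` ball T n| < b ^ n)%R.
Proof.
move=> H_sub b1; apply: NNPP => no_n.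
apply: (H_sub (gen T) (gen_is_subgroup T)); first by exists T.
exists T; split=> //; apply: (growth_rate_gt1_of_pow_le b1) => n.
by apply: Rnot_lt_le => lt; apply: no_n; exists n.
Qed.

Lemma large_kernel_subset (G H : groupType) (f : G -> H) (K : G -> Prop) :
  infinite_to_one f K -> forall m, exists F : {fset G},
    m <= #|` F| /\ forall g, g \in F -> K g /\ f g = 1%g.
Proof.
move=> ker_inf; elim=> [|m [F [mF F_ker]]]; first by exists fset0.
have [g [Kg [fg gF]]] : exists g, K g /\ f g = 1%g /\ g \notin F.
  apply: NNPP => no_g; apply: ker_inf; exists F => g Kg fg.
  by apply: NNPP => /negP gF; apply: no_g; exists g.
exists (g |` F); split; first by rewrite cardfsU1 gF.
by move=> h; rewrite in_fset1U => /orP [/eqP -> | /F_ker].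
Qed.

Section DirectProduct.
Variables H1 H2 : groupType.
Implicit Types S F U : {fset prodG H1 H2}.

Lemma card_fpow_prod U n :
  #|` fpow U n| <= #|` [fset u.1 | u in U]| ^ n * #|` ball [fset u.2 | u in U] n|.
Proof.
have fpow_pairs : fpow U n `<=` [fset ((x, y) : prodG H1 H2) |
    x in fpow [fset u.1 | u in U] n, y in fpow [fset u.2 | u in U] n].
  apply/fsubsetP => z zU; apply/imfset2P; exists z.1; first exact: fpow_morph zU.
  by exists z.2; [exact: fpow_morph zU | case: z {zU}].
apply: leq_trans (fsubset_leq_card fpow_pairs) _.
apply: leq_trans (card_imfset2_le _ _ _) _.
by apply: leq_mul; [exact: card_fpow | exact/fsubset_leq_card/fpow_sub_ball].
Qed.

Lemma card_proj1_setU_ker S F : (forall g, g \in F -> g.1 = 1%g) ->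
  #|` [fset u.1 | u in S `|` F]| <= #|` S| + 1.
Proof.
move=> F_ker.
have proj1_sub : [fset u.1 | u in S `|` F] `<=` [fset u.1 | u in S] `|` [fset 1%g].
  apply/fsubsetP => _ /imfsetP [u /= /fsetUP [uS | uF] ->]; rewrite in_fsetU.
    by rewrite in_imfset.
  by rewrite F_ker // fset11 orbT.
apply: leq_trans (fsubset_leq_card proj1_sub) _.
apply: leq_trans (leq_card_fsetU _ _) _.
by rewrite cardfs1 leq_add2r leq_imfset_card.
Qed.

Lemma card_fpow_setU_ker_lt S F n b : (forall g, g \in F -> g.1 = 1%g) ->
  (INR #|` ball [fset u.2 | u in S `|` F] n| < b ^ n)%R ->
  (INR #|` fpow (S `|` F) n| < ((INR #|` S| + 1) * b) ^ n)%R.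
Proof.
move=> F_ker ball_lt.
have proj1_le : (INR #|` [fset u.1 | u in S `|` F]| <= INR #|` S| + 1)%R.
  by rewrite -S_INR -addn1; apply: le_INR; apply/leP; apply: card_proj1_setU_ker.
apply: Rle_lt_trans (le_INR _ _ (leP (card_fpow_prod (S `|` F) n))) _.
rewrite mult_INR INR_expn Rpow_mult_distr.
apply: Rle_lt_trans (Rmult_le_compat_r _ _ _ (pos_INR _)
  (pow_incr _ _ n (conj (pos_INR _) proj1_le))) _.
by apply: Rmult_lt_compat_l => //; apply: pow_lt; have := pos_INR #|` S|; lra.
Qed.

End DirectProduct.

Theorem proposition2p18 (H1 H2 : groupType) (G : prodG H1 H2 -> Prop) :
  no_exp_growth H2 ->
  is_subgroup G -> fin_generated G ->
  infinite_to_one (@proj1G H1 H2) G ->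
  forall alpha beta : R, (0 < alpha)%R -> (0 < beta)%R ->
  exists U : {fset prodG H1 H2},
    generates U G /\
    exists n : nat,
      (INR #|` fpow U n| < Rpower (alpha * INR #|` U|) (beta * INR n))%R.
Proof.
move=> H2_sub G_sub [S S_gen] ker_inf alpha beta alpha0 beta0.
pose c := ((INR #|` S| + 1) * 2)%R.
have c0 : (0 < c)%R by have := pos_INR #|` S|; rewrite /c; lra.
have [m m_gt] := archimedean_nat (Rpower c (/ beta)) alpha0.
have [F [mF F_ker]] := large_kernel_subset ker_inf m.
exists (S `|` F); split; first by apply: generates_fsetU => // g /F_ker [].
have U_ge : (Rpower c (/ beta) <= alpha * INR #|` S `|` F|)%R.
  have : (INR m <= INR #|` S `|` F|)%R.
    by apply: le_INR; apply/leP; apply: leq_trans mF (fsubset_leq_card (fsubsetUr _ _)).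
  by nra.
have [n ball_lt] : exists n, (INR #|` ball [fset u.2 | u in S `|` F] n| < 2 ^ n)%R.
  by apply: no_exp_growth_ball_lt => //; lra.
exists n; apply: Rlt_le_trans (pow_le_Rpower n c0 beta0 U_ge).
by apply: card_fpow_setU_ker_lt => // g /F_ker [].
Qed.
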